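(* Let $R$ be a $d\times d$ expansive integer matrix, $B\subset\mathbb{Z}^d$ finite with $0\in B$, $N:=|B|$, $L\subset\mathbb{Z}^d$ finite with $0\in L$, and $(\alpha_l)_{l\in L}$ nonzero complex numbers such that the matrix $\frac{1}{\sqrt N}\left(e^{2\pi i (R^T)^{-1}l\cdot b}\alpha_l\right)_{l\in L,b\in B}$ has orthonormal columns. Then: (i) $N\le\#[L]$; (ii) for every $l_0\in L$, $\sum_{l\in L,\ l\in[l_0]}|\alpha_l|^2\le1$.
   Context: For $k\in\mathbb{Z}^d$, $[k]:=\{k'\in\mathbb{Z}^d : (k'-k)\cdot R^{-1}b\in\mathbb{Z}\text{ for all }b\in B\}$, and $[L]:=\{[l]: l\in L\}$ is the set of distinct classes of elements of $L$; $\#[L]$ is its cardinality. A matrix is expansive if all eigenvalues have modulus $>1$. *)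

From HB Require Import structures.
From mathcomp Require Import all_boot all_order all_algebra.
From mathcomp Require Import finmap.
From mathcomp Require Import boolp reals trigo.
From mathcomp Require Import complex.

Set Implicit Arguments.
Unset Strict Implicit.
Unset Printing Implicit Defensive.

Import Order.TTheory GRing.Theory Num.Theory.
Local Open Scope ring_scope.

Definition ratmx d (R : 'M[int]_d) : 'M[rat]_d := map_mx (fun z : int => z%:~R) R.
Definition ratcv d (k : 'cV[int]_d) : 'cV[rat]_d := map_mx (fun z : int => z%:~R) k.

(* the rational number  k . R^{-1} b  (=  (R^T)^{-1} k . b) *)
Definition pairR d (R : 'M[int]_d) (k b : 'cV[int]_d) : rat :=
  ((ratcv k)^T *m invmx (ratmx R) *m ratcv b) ord0 ord0.

Definition e2pii (Rr : realType) (q : rat) : Rr[i] :=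
  Complex (cos (2 * pi * ratr q)) (sin (2 * pi * ratr q)).

Definition expansive (Rr : realType) d (R : 'M[int]_d) : Prop :=
  forall z : Rr[i], eigenvalue (map_mx (fun x : int => x%:~R) R) z -> 1 < `|z|.

Definition cls d (R : 'M[int]_d) (B : {fset 'cV[int]_d}) (k : 'cV[int]_d)
  : 'cV[int]_d -> bool :=
  fun k' => all (fun b => pairR R (k' - k) b \is a Num.int) B.

Definition classes d (R : 'M[int]_d) (B L : {fset 'cV[int]_d}) :=
  [fset cls R B l | l in L]%fset.

Definition Mentry (Rr : realType) d (R : 'M[int]_d) (B : {fset 'cV[int]_d})
  (alpha : 'cV[int]_d -> Rr[i]) (l b : 'cV[int]_d) : Rr[i] :=
  (sqrtC (#|` B|%:R : Rr[i]))^-1 * e2pii Rr (pairR R l b) * alpha l.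

From HB Require Import structures.
From mathcomp Require Import all_boot all_order all_algebra.
From mathcomp Require Import finmap.
From mathcomp Require Import boolp reals trigo.
From mathcomp Require Import complex.
From mathcomp Require Import ring.
Import Order.TTheory GRing.Theory Num.Theory.
Local Open Scope ring_scope.

(* Proof: since |e^{2 pi i q}| = 1, every entry of column b has modulus
   |alpha_l| / sqrt N, so orthonormality of a single column gives
   sum_l |alpha_l|^2 = N.  A matrix with orthonormal columns is an isometry;
   applied to the unit vector w_b = e^{-2 pi i l0 . R^-1 b} / sqrt N it yields
   a vector whose l-th coordinate is alpha_l whenever l is in [l0], because the
   phases of rows l and l0 then coincide.  This bounds the mass of [l0] by 1,
   and splitting sum_l |alpha_l|^2 = N along the classes gives N <= #[L]. *)

Lemma orthonormal_cols_isometry {C : numClosedFieldType} {I J : eqType}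
    {rows : seq I} {cols : seq J} {M : I -> J -> C} :
  uniq cols ->
  (forall b b', b \in cols -> b' \in cols ->
     \sum_(l <- rows) (M l b)^* * M l b' = (b == b')%:R) ->
  forall w : J -> C, \sum_(l <- rows) `|\sum_(b <- cols) M l b * w b| ^+ 2
    = \sum_(b <- cols) `|w b| ^+ 2.
Proof.
move=> uniq_cols orth w.
transitivity (\sum_(l <- rows) \sum_(b <- cols) \sum_(b' <- cols)
                (w b)^* * w b' * ((M l b)^* * M l b')).
  apply: eq_bigr => l _; rewrite normCKC rmorph_sum big_distrl /=.
  apply: eq_bigr => b _; rewrite big_distrr /=.
  by apply: eq_bigr => b' _; rewrite rmorphM /=; ring.
rewrite exchange_big /=; apply: eq_big_seq => b b_in.
rewrite exchange_big /= (eq_big_seq (fun b' => (w b)^* * w b' * (b == b')%:R)).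
  rewrite (bigD1_seq b) //= eqxx mulr1 normCKC big1 ?addr0 // => b' b'_neq_b.
  by rewrite eq_sym (negbTE b'_neq_b) mulr0.
by move=> b' b'_in; rewrite -mulr_sumr orth.
Qed.

Lemma periodicz {U V : zmodType} {f : U -> V} {T : U} :
  periodic f T -> forall (m : int) (a : U), f (a + T *~ m) = f a.
Proof.
move=> fT [] n a; first exact: periodicn.
by rewrite NegzE mulrNz -[in RHS](subrK (T *+ n.+1) a) periodicn.
Qed.

Lemma norm_e2pii (Rr : realType) (q : rat) : `|e2pii Rr q| = 1.
Proof.
apply/eqP; rewrite -sqrp_eq1 // normCKC /e2pii; set x := 2 * pi * _.
by rewrite eq_complex /= mulNr opprK -!expr2 cos2Dsin2 mulrC mulNr subrr !eqxx.
Qed.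

Lemma e2pii_int_shift (Rr : realType) (q q' : rat) :
  q' - q \is a Num.int -> e2pii Rr q' = e2pii Rr q.
Proof.
move=> /intrP [m q'Bq].
have -> : q' = q + m%:~R by rewrite -q'Bq addrC subrK.
rewrite /e2pii rmorphD /= ratr_int.
have -> : 2 * pi * (ratr q + m%:~R) = 2 * pi * ratr q + (pi *+ 2) *~ m :> Rr.
  by rewrite mulrDr mulrzr mulr_natl.
by rewrite (periodicz (@cosD2pi Rr)) (periodicz (@sinD2pi Rr)).
Qed.

Lemma pairRB d (R : 'M[int]_d) (k k' b : 'cV[int]_d) :
  pairR R (k - k') b = pairR R k b - pairR R k' b.
Proof.
have ratcvB : ratcv (k - k') = ratcv k - ratcv k'.
  by apply/matrixP => i j; rewrite !mxE intrB.
by rewrite /pairR ratcvB linearB /= !mulmxBl mxE [in X in _ + X = _]mxE.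
Qed.

Lemma clsP d (R : 'M[int]_d) (B : {fset 'cV[int]_d}) (k k' : 'cV[int]_d) :
  reflect (forall b, b \in B -> pairR R k' b - pairR R k b \is a Num.int)
    (cls R B k k').
Proof. by apply: (iffP allP) => kk' b /kk'; rewrite pairRB. Qed.

Lemma cls_refl d (R : 'M[int]_d) (B : {fset 'cV[int]_d}) (l : 'cV[int]_d) :
  cls R B l l.
Proof. by apply/clsP => b _; rewrite subrr. Qed.

Lemma cls_eq d (R : 'M[int]_d) (B : {fset 'cV[int]_d}) (l0 l : 'cV[int]_d) :
  cls R B l0 l -> cls R B l = cls R B l0.
Proof.
move=> /clsP l0l; apply: funext => k; apply/clsP/clsP => lk b b_in.
  by have := rpredD (lk b b_in) (l0l b b_in); rewrite addrA subrK.
by have := rpredB (lk b b_in) (l0l b b_in); rewrite opprB addrA subrK.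
Qed.

Lemma cls_eqE d (R : 'M[int]_d) (B : {fset 'cV[int]_d}) (l0 l : 'cV[int]_d) :
  (cls R B l == cls R B l0) = cls R B l0 l.
Proof. by apply/eqP/idP => [<-|/cls_eq//]; apply: cls_refl. Qed.

Lemma partition_big_imfset {T K : choiceType} {V : nmodType}
    (g : T -> K) (L : {fset T}) (F : T -> V) :
  \sum_(l <- L) F l
    = \sum_(C <- [fset g l | l in L]%fset) \sum_(l <- L | g l == C) F l.
Proof.
under [RHS]eq_bigr do rewrite big_mkcond.
rewrite exchange_big /=; apply: eq_big_seq => l l_in.
rewrite (bigD1_seq (g l)) ?in_imfset ?fset_uniq //= eqxx big1 ?addr0 // => C.
by rewrite eq_sym => /negbTE ->.
Qed.

Lemma sqr_norm_inv_sqrtC (C : numClosedFieldType) (n : nat) :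
  `|(sqrtC (n%:R : C))^-1| ^+ 2 = n%:R^-1.
Proof. by rewrite normfV ger0_norm ?sqrtC_ge0 ?ler0n // exprVn sqrtCK. Qed.

Lemma sumr_const_fset {K : choiceType} {V : pzSemiRingType} (A : {fset K}) (c : V) :
  \sum_(a <- A) c = #|` A|%:R * c.
Proof. by rewrite big_const_seq count_predT -Monoid.iteropE mulr_natl. Qed.

Lemma norm_Mentry (Rr : realType) d (R : 'M[int]_d) (B : {fset 'cV[int]_d})
    (alpha : 'cV[int]_d -> Rr[i]) (l b : 'cV[int]_d) :
  `|Mentry R B alpha l b| ^+ 2 = `|alpha l| ^+ 2 / #|` B|%:R.
Proof.
by rewrite /Mentry !normrM norm_e2pii mulr1 exprMn sqr_norm_inv_sqrtC mulrC.
Qed.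

Section OrthonormalColumns.

Variables (Rr : realType) (d : nat) (R : 'M[int]_d).
Variables (B L : {fset 'cV[int]_d}) (alpha : 'cV[int]_d -> Rr[i]).
Hypothesis B0 : (0 : 'cV[int]_d) \in B.
Hypothesis orth : forall b b', b \in B -> b' \in B ->
  \sum_(l <- L) Num.conj (Mentry R B alpha l b) * Mentry R B alpha l b'
    = (b == b')%:R.

Let N := #|` B|.

Let N_neq0 : (N%:R : Rr[i]) != 0.
Proof. by rewrite pnatr_eq0 cardfs_eq0; apply/fset0Pn; exists 0. Qed.

Lemma sum_norm_alpha : \sum_(l <- L) `|alpha l| ^+ 2 = N%:R.
Proof.
have := orth _ _ B0 B0; rewrite eqxx.
under eq_bigr do rewrite -normCKC norm_Mentry.
by rewrite -mulr_suml => /(canRL (divfK N_neq0)); rewrite mul1r.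
Qed.

Lemma class_sum_norm_alpha_le1 (l0 : 'cV[int]_d) :
  \sum_(l <- L | cls R B l0 l) `|alpha l| ^+ 2 <= 1.
Proof.
pose w b := (sqrtC (N%:R : Rr[i]))^-1 * (e2pii Rr (pairR R l0 b))^*.
pose v l := \sum_(b <- B) Mentry R B alpha l b * w b.
have sum_w : \sum_(b <- B) `|w b| ^+ 2 = 1.
  under eq_bigr do rewrite normrM exprMn norm_conjC norm_e2pii expr1n mulr1.
  by rewrite sqr_norm_inv_sqrtC sumr_const_fset mulfV ?N_neq0.
have v_alpha l : cls R B l0 l -> v l = alpha l.
  move=> /clsP l0l; transitivity (\sum_(b <- B) N%:R^-1 * alpha l).
    apply: eq_big_seq => b /l0l/e2pii_int_shift shift; rewrite /Mentry shift.
    set s := sqrtC _; set e := e2pii _ _.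
    have -> : s^-1 * e * alpha l * (s^-1 * e^*) = s^-1 ^+ 2 * (e * e^*) * alpha l by ring.
    by rewrite -normCK norm_e2pii expr1n mulr1 exprVn sqrtCK.
  by rewrite sumr_const_fset mulrA mulfV ?N_neq0 ?mul1r.
rewrite -sum_w -(orthonormal_cols_isometry (fset_uniq B) orth w).
rewrite [X in _ <= X](bigID (cls R B l0)) /= (eq_bigr (fun l => `|v l| ^+ 2)).
  by rewrite lerDl; apply: sumr_ge0 => l _; rewrite exprn_ge0.
by move=> l /v_alpha ->.
Qed.

Lemma card_le_classes : (N <= #|` classes R B L|)%N.
Proof.
rewrite -(ler_nat Rr[i]) -sum_norm_alpha (partition_big_imfset (cls R B)).
rewrite card_fset_sum1 natr_sum big_seq [X in _ <= X]big_seq.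
apply: ler_sum => _ /imfsetP [l0 _ ->].
by rewrite (eq_bigl (cls R B l0)) ?class_sum_norm_alpha_le1 // => l; rewrite cls_eqE.
Qed.

End OrthonormalColumns.

Theorem proposition3p9 (Rr : realType) (d : nat) (R : 'M[int]_d)
  (B L : {fset 'cV[int]_d}) (alpha : 'cV[int]_d -> Rr[i]) :
  expansive Rr R ->
  (0 : 'cV[int]_d) \in B ->
  (0 : 'cV[int]_d) \in L ->
  (forall l, l \in L -> alpha l != 0) ->
  (forall b b', b \in B -> b' \in B ->
     \sum_(l <- L) Num.conj (Mentry R B alpha l b) * Mentry R B alpha l b'
       = (b == b')%:R) ->
  (#|` B| <= #|` classes R B L|)%N /\
  (forall l0, l0 \in L ->
     \sum_(l <- L | cls R B l0 l) `|alpha l| ^+ 2 <= 1).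
Proof.
move=> _ B0 _ _ orth; split; first exact: card_le_classes B0 orth.
by move=> l0 _; apply: class_sum_norm_alpha_le1 B0 orth l0.
Qed.
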